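(* Let $m\geq 2$ and let $f=a_0+a_1z+\cdots+a_mz^m\in\mathbb{Z}[z]$ be a primitive polynomial with $a_0a_m\neq 0$. Let $b$ be a positive divisor of $a_m$ and $\delta$ a real number with $1/b\leq\delta\leq 1$, and suppose there is an index $j$ with $0\leq j\leq m-1$ such that $$|a_j|>\sum_{0\leq i<j}|a_i||a_m|^{j-i}+\sum_{j<i\leq m}|a_i|\delta^{i-j},$$ where an empty sum is $0$. Then $f$ is a product of at most $m-j$ irreducible polynomials in $\mathbb{Z}[z]$. In particular, if $j=m-1$, then $f$ is irreducible in $\mathbb{Z}[z]$.
   Context: A polynomial in $\mathbb{Z}[z]$ is primitive if the greatest common divisor of its coefficients is $1$. ''$f$ is a product of at most $r$ irreducible polynomials'' means that in a factorization of $f$ into irreducible elements of $\mathbb{Z}[z]$, the number of factors (counted with multiplicity) is at most $r$. *)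

From HB Require Import structures.
From mathcomp Require Import all_boot all_order all_algebra.
From mathcomp Require Import reals.
Set Implicit Arguments. Unset Strict Implicit. Unset Printing Implicit Defensive.
Import Order.TTheory GRing.Theory Num.Theory.
Local Open Scope ring_scope.

Definition primitive_intpoly (p : {poly int}) : bool :=
  (\big[gcdn/0%N]_(i < size p) absz (p`_i)%R == 1)%N.

Definition irreducible_elt (D : idomainType) (p : D) : Prop :=
  p != 0 /\ p \isn't a GRing.unit /\
  forall q r : D, p = q * r -> q \is a GRing.unit \/ r \is a GRing.unit.

Definition prod_at_most_irr (D : idomainType) (r : nat) (p : D) : Prop :=
  exists (u : D) (s : seq D),
    [/\ u \is a GRing.unit, (size s <= r)%N,
        (forall q, q \in s -> irreducible_elt q) &
        p = u * \prod_(q <- s) q].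

(* The j-th coefficient of f dominates all the others on the circle |z| = rho,
   rho := 1/|a_m| (this is where b and delta enter), so at most m - j roots of f lie
   outside the disc |z| <= rho.  Every non-unit factor q of the primitive f is
   nonconstant and has a root outside that disc: otherwise all its roots lie strictly
   inside it (none is on the circle), and the nonzero integer q(0) would satisfy
   |q(0)| = |lc q| prod |z| < |a_m| rho = 1.  Hence a factorization of f into non-units
   has at most m - j factors, and one of maximal length consists of irreducibles.

   The root count avoids analysis: if f = P * prod_{|z| > rho} (X - z) with size P <= j,
   let r be the product of the expansions of the 1/(1 - X/z) truncated at order N.  Then
   f r agrees with a constant multiple of P below degree N, so its coefficient of X^(k+j)
   vanishes whenever k + j < N.  But |r_k| rho^k decays geometrically, so for N large it
   peaks at some k with k + j < N, and there the term a_j r_k dominates that coefficient. *)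

From HB Require Import structures.
From mathcomp Require Import all_boot all_order all_algebra.
From mathcomp Require Import reals.
From mathcomp Require Import algC zify ring.
From Stdlib Require Import Classical.
Set Implicit Arguments.
Unset Strict Implicit.
Unset Printing Implicit Defensive.
Import Order.TTheory GRing.Theory Num.Theory.
Local Open Scope ring_scope.

Lemma big_nat_split (V : nmodType) (F : nat -> V) (j n : nat) : (j < n)%N ->
  \sum_(0 <= i < n) F i = \sum_(0 <= i < j) F i + F j + \sum_(j.+1 <= i < n) F i.
Proof.
move=> jn; rewrite (@big_cat_nat _ _ _ j 0 n _ _ (leq0n j) (ltnW jn)) /=.
by rewrite (@big_ltn _ _ _ j n _ jn) addrA.
Qed.

Lemma norm_le_sum_others (R : numDomainType) (T : nat -> R) (j n : nat) :
  (j < n)%N -> \sum_(0 <= i < n) T i = 0 ->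
  `|T j| <= \sum_(0 <= i < j) `|T i| + \sum_(j.+1 <= i < n) `|T i|.
Proof.
move=> jn; rewrite (big_nat_split T jn) addrAC addrC => /eqP; rewrite addr_eq0 => /eqP->.
by rewrite normrN (le_trans (ler_normD _ _)) // lerD // ler_norm_sum.
Qed.

Lemma sum_nat_le_support (R : numDomainType) (w : nat -> R) (a n m : nat) :
  (forall i, 0 <= w i) -> (forall i, (m <= i)%N -> w i = 0) ->
  \sum_(a <= i < n) w i <= \sum_(a <= i < m) w i.
Proof.
move=> w_ge0 w_supp.
have [le_nm|lt_mn] := leqP n m.
  have [le_an|lt_na] := leqP a n; last by rewrite big_geq ?sumr_ge0 // ltnW.
  by rewrite (@big_cat_nat _ _ _ n a m _ _ le_an le_nm) /= lerDl sumr_ge0.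
have [le_am|lt_ma] := leqP a m.
  rewrite (@big_cat_nat _ _ _ m a n _ _ le_am (ltnW lt_mn)) /= gerDl.
  rewrite big_nat_cond big1 // => i.
  by rewrite andbT => /andP[/w_supp].
rewrite big_nat_cond big1 ?sumr_ge0 // => i; rewrite andbT => /andP[le_ai _].
by apply: w_supp; rewrite ltnW // (leq_trans lt_ma).
Qed.

Lemma sum_expr_le_inv (R : numFieldType) (q : R) (n : nat) : 0 <= q -> q < 1 ->
  \sum_(i < n) q ^+ i <= (1 - q)^-1.
Proof.
move=> q_ge0 q_lt1; have q1_gt0 : 0 < 1 - q by rewrite subr_gt0.
have -> : \sum_(i < n) q ^+ i = (1 - q)^-1 * (1 - q ^+ n).
  apply: (mulfI (lt0r_neq0 q1_gt0)); rewrite mulrA mulfV ?lt0r_neq0 // mul1r.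
  by rewrite -[1 - q]opprB mulNr -subrX1 opprB.
by rewrite -[leRHS]mulr1 ler_wpM2l ?invr_ge0 ?(ltW q1_gt0) // gerBl exprn_ge0.
Qed.

Lemma bernoulli_ineq (R : numDomainType) (x : R) (n : nat) : 0 <= x ->
  1 + n%:R * x <= (1 + x) ^+ n.
Proof.
move=> x_ge0; elim: n => [|n IH]; first by rewrite mul0r addr0 expr0.
have x1_ge0 : 0 <= 1 + x by rewrite addr_ge0.
rewrite exprS (le_trans _ (ler_wpM2l x1_ge0 IH)) //.
rewrite -natr1 mulrDr !mulrDl !mul1r mulr1 -!addrA lerD2l addrC lerD2r.
by rewrite lerDl !mulr_ge0.
Qed.

Lemma ex_mulr_expr_lt1 (R : archiNumFieldType) (K lam : R) :
  0 <= K -> 0 < lam -> lam < 1 -> exists n, K * lam ^+ n < 1.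
Proof.
move=> K_ge0 lam_gt0 lam_lt1; pose x := lam^-1 - 1.
have x_gt0 : 0 < x by rewrite /x subr_gt0 invf_gt1.
have Kx_ge0 : 0 <= K / x by rewrite divr_ge0 // ltW.
exists (Num.bound (K / x)).
rewrite -ltr_pdivlMr ?exprn_gt0 // div1r -exprVn.
have -> : lam^-1 = 1 + x by rewrite /x addrC subrK.
apply: lt_le_trans (bernoulli_ineq _ (ltW x_gt0)).
have := archi_boundP Kx_ge0; rewrite ltr_pdivrMr // => /lt_le_trans-> //.
by rewrite lerDr.
Qed.

Lemma ex_argmax_nat (R : numDomainType) (u : nat -> R) (N : nat) :
  (forall n, 0 <= u n) -> (0 < N)%N ->
  exists2 k, (k < N)%N & forall n, (n < N)%N -> u n <= u k.
Proof.
move=> u_ge0; elim: N => // -[|N] IH _.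
  by exists 0%N => // n; rewrite ltnS leqn0 => /eqP->.
have [k ltkN max_k] := IH isT.
have [le_uNk|le_ukN] := real_leP (ger0_real (u_ge0 N.+1)) (ger0_real (u_ge0 k)).
  exists k => [|n]; first exact: ltnW.
  by rewrite ltnS leq_eqVlt => /predU1P[->|/max_k].
exists N.+1 => // n; rewrite ltnS leq_eqVlt => /predU1P[->//|/max_k/le_trans]; apply.
exact: ltW.
Qed.

Lemma ex_common_bound_lt1 (R : numDomainType) (T : eqType) (s : seq T) (v : T -> R) :
  (forall x, x \in s -> 0 <= v x < 1) ->
  exists2 mu, 0 <= mu < 1 & forall x, x \in s -> v x <= mu.
Proof.
elim: s => [|x s IH] v_s; first by exists 0; rewrite ?lexx ?ltr01.
have /IH[mu /andP[mu_ge0 mu_lt1] le_v] : forall y, y \in s -> 0 <= v y < 1.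
  by move=> y ys; apply: v_s; rewrite inE ys orbT.
have /andP[vx_ge0 vx_lt1] := v_s x (mem_head x s).
have [le_vx_mu|le_mu_vx] := real_leP (ger0_real vx_ge0) (ger0_real mu_ge0).
  by exists mu; rewrite ?mu_ge0 // => y /predU1P[->|/le_v].
exists (v x); rewrite ?vx_ge0 // => y /predU1P[->//|/le_v/le_trans]; apply.
exact: ltW.
Qed.

Section ConstModXn.
Variable R : comNzRingType.

Definition const_modXn (N : nat) (p : {poly R}) : Prop :=
  exists c Y, p = c%:P + 'X^N * Y.

Lemma const_modXnM N p q :
  const_modXn N p -> const_modXn N q -> const_modXn N (p * q).
Proof.
move=> [c [Y ->]] [d [Z ->]]; exists (c * d), (c%:P * Z + Y * d%:P + 'X^N * Y * Z).
by rewrite polyCM; ring.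
Qed.

Lemma const_modXn_prod (I : eqType) (r : seq I) (F : I -> {poly R}) N :
  (forall i, i \in r -> const_modXn N (F i)) ->
  const_modXn N (\prod_(i <- r) F i).
Proof.
move=> Fc; rewrite big_seq; apply: (big_ind (const_modXn N)) => //.
- by exists 1, 0; rewrite mulr0 addr0.
- exact: const_modXnM.
Qed.

Lemma coef_mul_const_modXn N (P D : {poly R}) n :
  const_modXn N D -> (size P <= n < N)%N -> (P * D)`_n = 0.
Proof.
move=> [c [Y ->]] /andP[lePn ltnN].
by rewrite mulrDr coefD coefMC nth_default // mul0r add0r mulrCA coefXnM ltnN.
Qed.

End ConstModXn.

Section TruncatedGeometricSeries.
Variable F : fieldType.

Definition trunc_geom (N : nat) (c : F) : {poly F} := \poly_(k < N) (c ^+ k).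

Lemma mul_subX_trunc_geom N c :
  (1 - c *: 'X) * trunc_geom N c = 1 - c ^+ N *: 'X^N.
Proof.
have -> : trunc_geom N c = \sum_(k < N) (c *: 'X) ^+ k.
  by rewrite /trunc_geom poly_def; apply: eq_bigr => k _; rewrite exprZn.
by rewrite -[1 - _]opprB mulNr -subrX1 opprB exprZn.
Qed.

Lemma XsubC_trunc_geom_const_modXn N z : z != 0 ->
  const_modXn N (('X - z%:P) * trunc_geom N z^-1).
Proof.
move=> z_neq0; have -> : 'X - z%:P = (- z)%:P * (1 - z^-1 *: 'X).
  by rewrite mulrBr mulr1 mul_polyC scalerA mulNr mulfV // scaleN1r polyCN opprK addrC.
rewrite -mulrA mul_subX_trunc_geom; exists (- z), (z * z^-1 ^+ N)%:P.
by rewrite -mul_polyC polyCM; ring.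
Qed.

End TruncatedGeometricSeries.

Section WeightedCoefficientBounds.
Variables (R : numFieldType) (rho : R).
Hypothesis rho_ge0 : 0 <= rho.

Lemma coef_mul_weighted_le (p q : {poly R}) (mu lam A : R) :
  0 <= mu -> mu < lam -> 0 <= A ->
  (forall n, `|q`_n| * rho ^+ n <= mu ^+ n) ->
  (forall n, `|p`_n| * rho ^+ n <= A * lam ^+ n) ->
  forall n, `|(q * p)`_n| * rho ^+ n <= A * (1 - mu / lam)^-1 * lam ^+ n.
Proof.
move=> mu_ge0 lt_mu_lam A_ge0 q_le p_le n.
have lam_gt0 : 0 < lam by apply: le_lt_trans lt_mu_lam.
have q_ge0 : 0 <= mu / lam by rewrite divr_ge0 // ltW.
have q_lt1 : mu / lam < 1 by rewrite ltr_pdivrMr // mul1r.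
have termwise i : (i < n.+1)%N ->
    `|q`_i * p`_(n - i)| * rho ^+ n <= A * lam ^+ n * (mu / lam) ^+ i.
  rewrite ltnS => le_in; have ei := subnKC le_in.
  have -> : A * lam ^+ n * (mu / lam) ^+ i = mu ^+ i * (A * lam ^+ (n - i)).
    rewrite -[in lam ^+ n]ei exprD expr_div_n; field.
    by rewrite expf_neq0 // lt0r_neq0.
  rewrite -[in rho ^+ n]ei exprD normrM mulrACA.
  by apply: ler_pM; rewrite ?mulr_ge0 ?exprn_ge0.
rewrite coefM.
apply: le_trans (_ : \sum_(i < n.+1) `|q`_i * p`_(n - i)| * rho ^+ n <= _).
  by rewrite -mulr_suml ler_wpM2r ?exprn_ge0 // ler_norm_sum.
apply: le_trans (ler_sum _ (fun (i : 'I_n.+1) _ => termwise i (ltn_ord i))) _.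
rewrite -mulr_sumr -mulrA [_^-1 * _]mulrC mulrA.
rewrite ler_wpM2l ?mulr_ge0 ?exprn_ge0 ?(ltW lam_gt0) //.
exact: sum_expr_le_inv.
Qed.

Lemma coef_trunc_geom_weighted_le N c n :
  `|(trunc_geom N c)`_n| * rho ^+ n <= (`|c| * rho) ^+ n.
Proof.
rewrite coef_poly; case: ifP => _; last by rewrite normr0 mul0r exprn_ge0 ?mulr_ge0.
by rewrite normrX exprMn.
Qed.

End WeightedCoefficientBounds.

Definition dominant_coef (R : numDomainType) (p : {poly R}) (rho : R) (j : nat) :=
  \sum_(0 <= i < j) `|p`_i| * rho ^+ i + \sum_(j.+1 <= i < size p) `|p`_i| * rho ^+ i
    < `|p`_j| * rho ^+ j.

Section DominantCoefficient.
Variables (R : numDomainType) (p : {poly R}) (rho : R) (j : nat).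
Hypotheses (rho_ge0 : 0 <= rho) (p_dom : dominant_coef p rho j).

Lemma dominant_coef_lt_size : (j < size p)%N.
Proof.
rewrite ltnNge; apply/negP => le_pj; move: p_dom.
rewrite /dominant_coef nth_default // normr0 mul0r le_gtF //.
by rewrite addr_ge0 // sumr_ge0 // => i _; rewrite mulr_ge0 ?exprn_ge0.
Qed.

Lemma dominant_coef_coefM_neq0 (r : {poly R}) (k : nat) :
  let u i := `|r`_i| * rho ^+ i in
  0 < u k -> (forall i, (i <= k + j)%N -> u i <= u k) -> (p * r)`_(k + j) != 0.
Proof.
move=> u uk_gt0 u_le; apply/eqP => prn0.
pose w i := `|p`_i| * rho ^+ i.
have w_ge0 i : 0 <= w i by rewrite mulr_ge0 ?exprn_ge0.
have wT i : (i <= k + j)%N -> `|p`_i * r`_(k + j - i)| * rho ^+ (k + j) <= u k * w i.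
  move=> le_in; rewrite -[in rho ^+ _](subnKC le_in) exprD normrM mulrACA mulrC.
  by apply: ler_wpM2r; [exact: w_ge0 | exact: u_le (leq_subr i _)].
have Tj : `|p`_j * r`_(k + j - j)| * rho ^+ (k + j) = u k * w j.
  by rewrite addnK normrM addnC exprD mulrACA mulrC.
have := @norm_le_sum_others _ (fun i => p`_i * r`_(k + j - i)) j (k + j).+1.
rewrite ltnS leq_addl big_mkord -coefM prn0 => /(_ isT erefl).
move/(ler_wpM2r (exprn_ge0 (k + j) rho_ge0)); rewrite Tj.
have sums_le : (\sum_(0 <= i < j) `|p`_i * r`_(k + j - i)|
    + \sum_(j.+1 <= i < (k + j).+1) `|p`_i * r`_(k + j - i)|) * rho ^+ (k + j)
    <= u k * (\sum_(0 <= i < j) w i + \sum_(j.+1 <= i < size p) w i).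
  rewrite mulrDl !mulr_suml mulrDr !mulr_sumr lerD //.
    by apply: ler_sum_nat => i /andP[_ /ltnW/leq_trans/(_ (leq_addl k j))/wT].
  apply: le_trans (_ : \sum_(j.+1 <= i < (k + j).+1) u k * w i <= _).
    by apply: ler_sum_nat => i /andP[_]; rewrite ltnS => /wT.
  apply: sum_nat_le_support => i; first by rewrite mulr_ge0 // ltW.
  by move=> le_pi; rewrite /w nth_default // normr0 mul0r mulr0.
move=> /le_trans/(_ sums_le); rewrite ler_pM2l // => /(lt_le_trans p_dom).
by rewrite ltxx.
Qed.

Lemma dominant_coef_root_norm_neq z : root p z -> `|z| != rho.
Proof.
move=> /eqP pz0; apply/eqP => z_rho.
have := @norm_le_sum_others _ (fun i => p`_i * z ^+ i) j (size p).
rewrite dominant_coef_lt_size big_mkord -horner_coef pz0 => /(_ isT erefl).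
rewrite normrM normrX z_rho.
under eq_bigr do rewrite normrM normrX z_rho.
under [X in _ + X]eq_bigr do rewrite normrM normrX z_rho.
by move=> /le_lt_trans/(_ p_dom); rewrite ltxx.
Qed.

End DominantCoefficient.

Section TruncatedInverse.
Variables (C : archiNumFieldType) (rho : C).
Hypothesis rho_gt0 : 0 < rho.

Lemma coef_prod_trunc_geom_le (t : seq C) (mu lam : C) N :
  0 <= mu -> mu < lam -> (forall z, z \in t -> `|z^-1| * rho <= mu) ->
  forall n, `|(\prod_(z <- t) trunc_geom N z^-1)`_n| * rho ^+ n
            <= (1 - mu / lam)^-1 ^+ size t * lam ^+ n.
Proof.
move=> mu_ge0 lt_mu_lam; elim: t => [|z t IH] t_le n.
  rewrite big_nil coef1 expr0 mul1r; case: n => [|n]; first by rewrite normr1 mulr1.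
  by rewrite normr0 mul0r exprn_ge0 // ltW // (le_lt_trans mu_ge0).
have c_ge0 : 0 <= (1 - mu / lam)^-1.
  rewrite invr_ge0 subr_ge0 ler_pdivrMr ?mul1r ?ltW //.
  exact: le_lt_trans lt_mu_lam.
rewrite big_cons exprSr; apply: coef_mul_weighted_le => //; first exact: ltW.
- exact: exprn_ge0.
- move=> i; apply: le_trans (coef_trunc_geom_weighted_le _ _ _ _) _ => //; first exact: ltW.
  rewrite lerXn2r ?nnegrE ?mulr_ge0 ?(ltW rho_gt0) //; first exact: t_le (mem_head _ _).
- by apply: IH => y yt; apply: t_le; rewrite inE yt orbT.
Qed.

Lemma ex_peak_prod_trunc_geom (t : seq C) (j : nat) :
  (forall z, z \in t -> rho < `|z|) ->
  exists N k, (k + j < N)%N /\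
    let u i := `|(\prod_(z <- t) trunc_geom N z^-1)`_i| * rho ^+ i in
    0 < u k /\ forall i, (i <= k + j)%N -> u i <= u k.
Proof.
move=> t_gt.
have [mu /andP[mu_ge0 mu_lt1] t_le] : exists2 mu, 0 <= mu < 1 &
    forall z, z \in t -> `|z^-1| * rho <= mu.
  apply: ex_common_bound_lt1 => z zt; have z_gt0 : 0 < `|z| := lt_trans rho_gt0 (t_gt z zt).
  by rewrite mulr_ge0 ?(ltW rho_gt0) //= normfV mulrC ltr_pdivrMr // mul1r t_gt.
pose lam := (mu + 1) / 2; have [lt_mu_lam lam_lt1] := midf_lt mu_lt1.
have lam_gt0 : 0 < lam := le_lt_trans mu_ge0 lt_mu_lam.
pose K := (1 - mu / lam)^-1 ^+ size t.
have K_ge0 : 0 <= K.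
  by rewrite exprn_ge0 // invr_ge0 subr_ge0 ler_pdivrMr ?mul1r ?ltW.
have [n0 Klam_lt1] := ex_mulr_expr_lt1 K_ge0 lam_gt0 lam_lt1.
pose N := (n0 + j).+1; exists N.
pose u i := `|(\prod_(z <- t) trunc_geom N z^-1)`_i| * rho ^+ i.
have u_le i : u i <= K * lam ^+ i by exact: coef_prod_trunc_geom_le.
have u0 : u 0%N = 1.
  rewrite /u coef0_prod big1 ?normr1 ?mulr1 // => z _.
  by rewrite coef_poly expr0.
have u_ge0 i : 0 <= u i by rewrite mulr_ge0 ?exprn_ge0 ?(ltW rho_gt0).
have [k ltkN k_max] := ex_argmax_nat u_ge0 (ltn0Sn (n0 + j)).
have uk_ge1 : 1 <= u k by rewrite -u0 k_max.
have ltkjN : (k + j < N)%N.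
  rewrite /N ltnS leq_add2r leqNgt; apply/negP => lt_n0k.
  have lam_k_le : lam ^+ k <= lam ^+ n0 by rewrite ler_wiXn2l ?ltW // ltnW.
  have Klam_k_le := ler_wpM2l K_ge0 lam_k_le.
  have := le_lt_trans (le_trans uk_ge1 (le_trans (u_le k) Klam_k_le)) Klam_lt1.
  by rewrite ltxx.
exists k; split=> //; split=> [|i le_ikj]; first exact: lt_le_trans ltr01 uk_ge1.
exact/k_max/(leq_ltn_trans le_ikj).
Qed.

Lemma dominant_coef_cofactor_size (P : {poly C}) (t : seq C) (j : nat) :
  (forall z, z \in t -> rho < `|z|) ->
  dominant_coef (P * \prod_(z <- t) ('X - z%:P)) rho j -> (j < size P)%N.
Proof.
move=> t_gt dom; rewrite ltnNge; apply/negP => le_Pj.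
have [N [k [ltkjN [uk_gt0 u_le]]]] := ex_peak_prod_trunc_geom j t_gt.
have := dominant_coef_coefM_neq0 (ltW rho_gt0) dom uk_gt0 u_le.
rewrite -mulrA -big_split /= (@coef_mul_const_modXn _ N) ?eqxx //.
- apply: const_modXn_prod => z zt; apply: XsubC_trunc_geom_const_modXn.
  by rewrite -normr_gt0 (lt_trans rho_gt0) ?t_gt.
- by rewrite ltkjN andbT (leq_trans le_Pj) ?leq_addl.
Qed.

End TruncatedInverse.

Lemma intr_norm_ge1 (R : numDomainType) (x : int) : x != 0 -> 1 <= (`|x|%:~R : R).
Proof. by move=> x_neq0; rewrite -[1]/(1%:~R) ler_int -gtz0_ge1 normr_gt0. Qed.

Lemma absz_eq1_unit (x : int) : absz x = 1%N -> x \is a GRing.unit.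
Proof. by case: x => [n /= ->|[]]. Qed.

Lemma primitive_nonunit_factor_size_gt1 (f q h : {poly int}) :
  primitive_intpoly f -> f != 0 -> f = q * h -> q \isn't a GRing.unit ->
  (1 < size q)%N.
Proof.
move=> prim_f f_neq0 def_f; apply: contraNT; rewrite -leqNgt => /size1_polyC def_q.
have q0_neq0 : q`_0 != 0.
  by apply: contraNneq f_neq0 => q00; rewrite def_f def_q q00 mul0r.
have coef_f k : f`_k = q`_0 * h`_k by rewrite def_f {1}def_q coefCM.
have : (absz (q`_0)%R %| 1)%N.
  by move/eqP: prim_f => <-; apply/dvdn_biggcdP => i _; rewrite coef_f abszM dvdn_mulr.
rewrite dvdn1 => /eqP q0_abs1.
by rewrite poly_unitE def_q size_polyC q0_neq0 coefC absz_eq1_unit.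
Qed.

Section IntegerFactorRoots.
Variable C : numClosedFieldType.
Local Notation toC p := (map_poly (intr : int -> C) p).

Lemma int_factor_root_norm_gt (f q h : {poly int}) (j : nat) :
  let rho := (`|lead_coef f|%:~R : C)^-1 in
  f = q * h -> f`_0 != 0 -> (1 < size q)%N -> dominant_coef (toC f) rho j ->
  exists2 z, root (toC q) z & rho < `|z|.
Proof.
move=> rho def_f f0_neq0 size_q dom.
have q_neq0 : q != 0 by rewrite -size_poly_gt0 ltnW.
have h_neq0 : h != 0 by apply: contraNneq f0_neq0 => h0; rewrite def_f h0 mulr0 coef0.
have lcf_ge1 : 1 <= (`|lead_coef f|%:~R : C).
  by rewrite intr_norm_ge1 // def_f lead_coefM mulf_neq0 ?lead_coef_eq0.
have rho_gt0 : 0 < rho by rewrite invr_gt0 (lt_le_trans ltr01).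
have rho_le1 : rho <= 1 by rewrite invf_le1 // (lt_le_trans ltr01).
have [r def_qC] := closed_field_poly_normal (toC q).
have lcq_neq0 : lead_coef (toC q) != 0.
  by rewrite lead_coef_map_inj ?intr_eq0 ?lead_coef_eq0 //; apply: intr_inj.
have size_r : (0 < size r)%N.
  have := size_q; rewrite -(size_map_inj_poly (@intr_inj C)) ?intr_eq0 //.
  by rewrite def_qC size_scale // size_prod_XsubC.
case: (boolP (has (fun z => rho < `|z|) r)) => [/hasP[z zr rho_lt_z]|/hasPn small].
  by exists z; rewrite // def_qC rootZ // root_prod_XsubC.
have roots_small z : z \in r -> 0 <= `|z| < rho.
  move=> zr; have : root (toC f) z.
    by rewrite def_f rmorphM /= rootM def_qC rootZ // root_prod_XsubC zr.
  move/(dominant_coef_root_norm_neq (ltW rho_gt0) dom) => z_neq_rho.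
  rewrite normr_ge0 lt_neqAle z_neq_rho /= real_leNgt ?normr_real ?gtr0_real //.
  exact: small.
have lcq_le : `|lead_coef (toC q)| <= (`|lead_coef f|%:~R : C).
  rewrite lead_coef_map_inj //; last exact: intr_inj.
  rewrite -intr_norm ler_int def_f lead_coefM normrM ler_peMr //.
  by rewrite -gtz0_ge1 normr_gt0 lead_coef_eq0.
have q0_neq0 : q`_0 != 0.
  by apply: contraNneq f0_neq0 => q00; rewrite def_f coef0M q00 mul0r.
suff : 1 < 1 :> C by rewrite ltxx.
apply: le_lt_trans (@intr_norm_ge1 C _ q0_neq0) _.
rewrite intr_norm -(coef_map intr) -horner_coef0 def_qC hornerZ horner_prod normrM normr_prod.
under eq_bigr do rewrite hornerXsubC sub0r normrN.
have lcq_gt0 : 0 < `|lead_coef (toC q)| by rewrite normr_gt0.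
apply: lt_le_trans (_ : `|lead_coef (toC q)| * \prod_(z <- r) rho <= _).
  rewrite ltr_pM2l // big_seq [X in _ < X]big_seq ltr_prod //.
  by case: (r) size_r => // z r' _; rewrite /= inE eqxx.
have prod_rho_le : \prod_(z <- r) rho <= rho.
  case: (r) size_r => // z r' _; rewrite big_cons ler_piMr ?(ltW rho_gt0) //.
  by apply: prodr_ile1 => _ _; rewrite (ltW rho_gt0).
apply: le_trans (ler_wpM2l (normr_ge0 _) prod_rho_le) _.
apply: le_trans (ler_wpM2r (ltW rho_gt0) lcq_le) _.
by rewrite mulfV // lt0r_neq0 // (lt_le_trans ltr01).
Qed.

Lemma ex_roots_dvdp_prod (s : seq {poly int}) (P : pred C) :
  (forall q, q \in s -> exists2 z, root (toC q) z & P z) ->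
  exists t : seq C, [/\ size t = size s, all P t &
    \prod_(z <- t) ('X - z%:P) %| toC (\prod_(q <- s) q)].
Proof.
elim: s => [|q s IH] s_roots; first by exists [::]; rewrite !big_nil rmorph1 dvdpp.
have [z qz Pz] := s_roots q (mem_head q s).
have /IH[t [size_t Pt t_dvd]] : forall p, p \in s -> exists2 z, root (toC p) z & P z.
  by move=> p ps; apply: s_roots; rewrite inE ps orbT.
exists (z :: t); split; rewrite /= ?size_t ?Pz //.
by rewrite !big_cons rmorphM dvdp_mul // dvdp_XsubCl.
Qed.

End IntegerFactorRoots.

Section IntegerFactorizationLength.
Variable C : archiClosedFieldType.
Local Notation toC p := (map_poly (intr : int -> C) p).

Lemma int_factorization_size_lt (f u : {poly int}) (s : seq {poly int}) (j : nat) :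
  let rho := (`|lead_coef f|%:~R : C)^-1 in
  primitive_intpoly f -> f`_0 != 0 -> dominant_coef (toC f) rho j ->
  f = u * \prod_(q <- s) q -> (forall q, q \in s -> q \isn't a GRing.unit) ->
  (size s + j < size f)%N.
Proof.
move=> rho prim_f f0_neq0 dom def_f s_nonunit.
have f_neq0 : f != 0 by apply: contraNneq f0_neq0 => ->; rewrite coef0.
have rho_gt0 : 0 < rho by rewrite invr_gt0 ltr0z normr_gt0 lead_coef_eq0.
have [t [size_t t_large t_dvd]] : exists t : seq C, [/\ size t = size s,
    all (fun z => rho < `|z|) t & \prod_(z <- t) ('X - z%:P) %| toC (\prod_(q <- s) q)].
  apply: ex_roots_dvdp_prod => q qs.
  have def_f' : f = q * (u * \prod_(p <- rem q s) p) by rewrite def_f (big_rem q) //= mulrCA.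
  have size_q := primitive_nonunit_factor_size_gt1 prim_f f_neq0 def_f' (s_nonunit q qs).
  exact: int_factor_root_norm_gt def_f' f0_neq0 size_q dom.
have /dvdpP[P def_fC] : \prod_(z <- t) ('X - z%:P) %| toC f.
  by rewrite def_f rmorphM /= dvdp_mull.
rewrite def_fC in dom.
have := dominant_coef_cofactor_size rho_gt0 (allP t_large) dom.
have P_neq0 : P != 0.
  apply: contraTneq (dominant_coef_lt_size (ltW rho_gt0) dom) => ->.
  by rewrite mul0r size_poly0.
rewrite -(size_map_inj_poly (@intr_inj C)) ?intr_eq0 // def_fC size_mul //.
  by rewrite size_prod_XsubC addnS /= size_t addnC ltn_add2r.
exact/monic_neq0/monic_prod_XsubC.
Qed.

End IntegerFactorizationLength.

Section Factorizations.
Variable D : idomainType.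

Lemma nonunit_reducible_split (q : D) :
  q \isn't a GRing.unit -> ~ irreducible_elt q ->
  exists a c, [/\ q = a * c, a \isn't a GRing.unit & c \isn't a GRing.unit].
Proof.
move=> qNU q_red; have [->|q_neq0] := eqVneq q 0.
  by exists 0, 0; split; rewrite ?mulr0 ?unitr0.
apply: NNPP => no_split; apply: q_red; split=> //; split=> [//|a c def_q].
apply: NNPP => /not_or_and[aNU cNU]; apply: no_split; exists a, c.
by split=> //; exact/negP.
Qed.

Lemma ex_finer_factorization (s : seq D) :
  (forall q, q \in s -> q \isn't a GRing.unit) ->
  ~ (forall q, q \in s -> irreducible_elt q) ->
  exists s', [/\ size s' = (size s).+1, \prod_(q <- s') q = \prod_(q <- s) q &
    forall q, q \in s' -> q \isn't a GRing.unit].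
Proof.
move=> sNU s_red; have [q qs q_red] : exists2 q, q \in s & ~ irreducible_elt q.
  apply: NNPP => no_q; apply: s_red => q qs.
  by apply: NNPP => q_red; apply: no_q; exists q.
have [a [c [def_q aNU cNU]]] := nonunit_reducible_split (sNU q qs) q_red.
exists [:: a, c & rem q s]; split.
- by rewrite /= size_rem // prednK //; case: (s) qs.
- by rewrite [in RHS](big_rem q) //= !big_cons def_q mulrA.
- by move=> p; rewrite !inE => /predU1P[->|/predU1P[->|/mem_rem/sNU]].
Qed.

Lemma prod_at_most_irr_of_bounded (B : nat) (f : D) :
  (forall u s, u \is a GRing.unit -> f = u * \prod_(q <- s) q ->
    (forall q, q \in s -> q \isn't a GRing.unit) -> (size s <= B)%N) ->
  prod_at_most_irr B f.
Proof.
move=> bounded; have [fU|fNU] := boolP (f \is a GRing.unit).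
  by exists f, [::]; rewrite big_nil mulr1.
suff refine n u s : (B - size s <= n)%N -> u \is a GRing.unit ->
    f = u * \prod_(q <- s) q -> (forall q, q \in s -> q \isn't a GRing.unit) ->
    prod_at_most_irr B f.
  apply: (refine B 1 [:: f]); rewrite ?leq_subr ?unitr1 ?big_seq1 ?mul1r //.
  by move=> q /[1!inE] /eqP->.
elim: n u s => [|n IH] u s le_Bs uU def_f sNU.
all: have [s_irr|s_red] := classic (forall q, q \in s -> irreducible_elt q);
  first by exists u, s; split; rewrite ?(bounded u s).
all: have [s' [size_s' prod_s' s'NU]] := ex_finer_factorization sNU s_red.
all: rewrite -prod_s' in def_f; have := bounded u s' uU def_f s'NU.
- by rewrite size_s' => lt_sB; move: le_Bs; rewrite leqn0 subn_eq0 leqNgt lt_sB.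
- rewrite size_s' => lt_sB; apply: (IH u s') => //.
  by rewrite size_s' subnS -ltnS prednK // subn_gt0.
Qed.

End Factorizations.

(* Multiply the hypothesis by |a_m|^(m - j) and use delta |a_m| >= delta b >= 1. *)
Lemma int_dominant_of_delta (R : numFieldType) (f : {poly int}) (b : nat) (delta : R)
    (j m : nat) :
  f`_m != 0 -> (0 < b)%N -> (b%:Z %| f`_m)%Z -> 1 / b%:R <= delta -> (j <= m)%N ->
  \sum_(0 <= i < j) (`|f`_i| * `|f`_m| ^+ (j - i))%:~R
    + \sum_(j.+1 <= i < m.+1) (`|f`_i|)%:~R * delta ^+ (i - j) < (`|f`_j|)%:~R :> R ->
  \sum_(0 <= i < j) `|f`_i| * `|f`_m| ^+ (m - i)
    + \sum_(j.+1 <= i < m.+1) `|f`_i| * `|f`_m| ^+ (m - i)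
    < `|f`_j| * `|f`_m| ^+ (m - j).
Proof.
move=> am_neq0 b_gt0 b_dvd le_delta le_jm H.
pose A : R := (`|f`_m|)%:~R.
have b_le_A : b%:R <= A.
  by rewrite /A -natr_absz ler_nat dvdn_leq ?absz_gt0.
have b_gt0' : (0 : R) < b%:R by rewrite ltr0n.
have A_gt0 : 0 < A := lt_le_trans b_gt0' b_le_A.
have delta_ge0 : 0 <= delta by apply: le_trans le_delta; rewrite divr_ge0 ?ltW.
have dA_ge1 : 1 <= delta * A.
  by apply: le_trans (ler_wpM2l delta_ge0 b_le_A); rewrite -ler_pdivrMr.
rewrite -(ltr_int R) rmorphD /= !rmorph_sum /= intrM rmorphXn /= -/A.
rewrite -(ltr_pM2r (exprn_gt0 (m - j) A_gt0)) in H.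
apply: le_lt_trans H; rewrite mulrDl !mulr_suml; apply: lerD.
  apply: ler_sum_nat => i /andP[_ lt_ij].
  have -> : (m - i = (j - i) + (m - j))%N by lia.
  by rewrite !intrM !rmorphXn /= -/A exprD mulrA.
apply: ler_sum_nat => i /andP[lt_ji le_im].
rewrite intrM rmorphXn /= -/A.
have -> : (m - j = (i - j) + (m - i))%N by lia.
have -> : `|f`_i|%:~R * delta ^+ (i - j) * A ^+ (i - j + (m - i))
    = `|f`_i|%:~R * A ^+ (m - i) * (delta * A) ^+ (i - j) :> R.
  by rewrite exprMn exprD; ring.
apply: ler_peMr; last exact: exprn_ege1.
by rewrite mulr_ge0 ?exprn_ge0 ?(ltW A_gt0) // ler0z normr_ge0.
Qed.

Lemma dominant_coef_intr (K : numFieldType) (f : {poly int}) (j m : nat) :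
  size f = m.+1 -> (j <= m)%N ->
  \sum_(0 <= i < j) `|f`_i| * `|f`_m| ^+ (m - i)
    + \sum_(j.+1 <= i < m.+1) `|f`_i| * `|f`_m| ^+ (m - i)
    < `|f`_j| * `|f`_m| ^+ (m - j) ->
  dominant_coef (map_poly (intr : int -> K) f) (`|lead_coef f|%:~R)^-1 j.
Proof.
move=> size_f le_jm H; rewrite lead_coefE size_f /=.
pose A : K := `|f`_m|%:~R.
have A_gt0 : 0 < A.
  rewrite ltr0z normr_gt0 -[m]/(m.+1.-1) -size_f -lead_coefE lead_coef_eq0.
  by rewrite -size_poly_gt0 size_f.
have scale i : (i <= m)%N -> ((`|f`_i| * `|f`_m| ^+ (m - i))%:~R : K) * A^-1 ^+ m
    = `|(map_poly intr f)`_i| * A^-1 ^+ i.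
  move=> le_im; rewrite coef_map /= intrM rmorphXn /= -/A intr_norm.
  rewrite -{2}(subnK le_im) exprD mulrA -[_ * A ^+ _ * _]mulrA -exprMn mulfV ?lt0r_neq0 //.
  by rewrite expr1n mulr1.
rewrite /dominant_coef size_map_inj_poly ?size_f //; last exact: intr_inj.
rewrite -(ltr_int K) rmorphD /= !rmorph_sum /= in H.
have rho_m_gt0 : 0 < A^-1 ^+ m by rewrite exprn_gt0 // invr_gt0.
move: H; rewrite -(ltr_pM2r rho_m_gt0) mulrDl !mulr_suml scale //.
apply: le_lt_trans; apply: lerD; apply: ler_sum_nat => i /andP[_ lt_i].
  by rewrite scale // (leq_trans (ltnW lt_i)).
by rewrite scale.
Qed.

Theorem theorem4 (R : realType) (f : {poly int}) (b : nat) (delta : R) (j : nat) :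
  let m := (size f).-1 in
  (2 <= m)%N ->
  primitive_intpoly f ->
  f`_0 * f`_m != 0 ->
  (0 < b)%N -> (b%:Z %| f`_m)%Z ->
  1 / b%:R <= delta <= 1 ->
  (j <= m - 1)%N ->
  (\sum_(0 <= i < j) (`|f`_i| * `|f`_m| ^+ (j - i))%:~R
     + \sum_(j.+1 <= i < m.+1) (`|f`_i|)%:~R * delta ^+ (i - j) < (`|f`_j|)%:~R :> R) ->
  prod_at_most_irr (m - j) f.
Proof.
move=> m m_ge2 prim_f f0m_neq0 b_gt0 b_dvd /andP[le_delta _] le_j H.
move: f0m_neq0; rewrite mulf_eq0 negb_or => /andP[f0_neq0 fm_neq0].
have size_f : size f = m.+1.
  by rewrite prednK // size_poly_gt0; apply: contraNneq f0_neq0 => ->; rewrite coef0.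
have le_jm : (j <= m)%N := leq_trans le_j (leq_subr 1 m).
have dom := dominant_coef_intr algC size_f le_jm
  (int_dominant_of_delta fm_neq0 b_gt0 b_dvd le_delta le_jm H).
apply: prod_at_most_irr_of_bounded => u s _ def_f s_nonunit.
have := int_factorization_size_lt prim_f f0_neq0 dom def_f s_nonunit.
rewrite size_f ltnS => lt_sj; rewrite -(leq_add2r j) subnK //.
Qed.
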